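(* Let $n\ge3$ with $n\equiv 3\pmod 4$ and let $D_{2n}=\langle a,b\mid a^n=b^2=1,\ ba=a^{-1}b\rangle$ be the dihedral group of order $2n$. Then the sequence $S=a^{[(n-1)/2]}\boldsymbol{\cdot}b^{[2]}$ lies in $\mathsf q(\mathcal B(D_{2n}))\setminus\mathcal B(D_{2n})$ while $S^{[2]},S^{[3]}\in\mathcal B(D_{2n})$; consequently, if a finite group $G$ contains a subgroup isomorphic to $D_{2n}$, then $\mathcal B(G)$ is not seminormal.
   Context: For a finite group $G$ (multiplicative, identity $1_G$) and $G_0\subset G$, $\mathcal F(G_0)$ is the free abelian monoid with basis $G_0$ (sequences $S=g_1\boldsymbol{\cdot}\ldots\boldsymbol{\cdot}g_\ell$, operation $\boldsymbol{\cdot}$ = concatenation; $g^{[k]}$ and $S^{[k]}$ denote $k$-fold products). $\pi(S)=\{g_{\tau(1)}\cdots g_{\tau(\ell)}:\tau\text{ a permutation of }[1,\ell]\}$ and $\mathcal B(G_0)=\{S\in\mathcal F(G_0):1_G\in\pi(S)\}$. $\mathsf q(H)$ is the quotient group of a monoid $H$. A monoid $H$ is seminormal if $x\in\mathsf q(H)$ and $x^2,x^3\in H$ imply $x\in H$. *)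

From HB Require Import structures.
From mathcomp Require Import all_boot all_order all_algebra all_fingroup.
Set Implicit Arguments. Unset Strict Implicit. Unset Printing Implicit Defensive.
Import GRing.Theory.

(* Sequences over a finite group: an element S of the free abelian monoid
   F(gT) is represented by its multiplicity function S : {ffun gT -> nat}.
   Concatenation is pointwise addition. *)
Definition fseq (gT : finGroupType) := {ffun gT -> nat}.

Definition seq_mul (gT : finGroupType) (S1 S2 : fseq gT) : fseq gT :=
  [ffun g => (S1 g + S2 g)%N].

Definition seq_pow1 (gT : finGroupType) (x : gT) (k : nat) : fseq gT :=
  [ffun g => ((g == x) * k)%N].

Definition seq_rep (gT : finGroupType) (k : nat) (S : fseq gT) : fseq gT :=
  [ffun g => (k * S g)%N].

Definition in_F (gT : finGroupType) (G0 : {set gT}) (S : fseq gT) : Prop :=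
  forall g, S g != 0%N -> g \in G0.

(* x \in pi(S): x is the product of the terms of S in some order, i.e. the
   product of some list s whose multiset of terms is S. *)
Definition in_pi (gT : finGroupType) (S : fseq gT) (x : gT) : Prop :=
  exists s : seq gT, (forall g, count_mem g s = S g) /\ (\prod_(y <- s) y)%g = x.

Definition in_B (gT : finGroupType) (G0 : {set gT}) (S : fseq gT) : Prop :=
  in_F G0 S /\ in_pi S 1%g.

(* The quotient group q(F(gT)) is the free abelian group Z^(gT), represented
   by functions gT -> int; F(gT) embeds via S |-> (g |-> S g). *)
Definition embZ (gT : finGroupType) (S : fseq gT) : gT -> int :=
  fun g => Posz (S g).

Definition in_BZ (gT : finGroupType) (G0 : {set gT}) (x : gT -> int) : Prop :=
  exists A : fseq gT, in_B G0 A /\ forall g, x g = Posz (A g).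

Definition in_qB (gT : finGroupType) (G0 : {set gT}) (x : gT -> int) : Prop :=
  exists A B : fseq gT, [/\ in_B G0 A, in_B G0 B &
    forall g, x g = (Posz (A g) - Posz (B g))%R].

(* B(G0) is seminormal: x \in q(B), x^2, x^3 \in B imply x \in B
   (written additively in Z^(gT)). *)
Definition B_seminormal (gT : finGroupType) (G0 : {set gT}) : Prop :=
  forall x : gT -> int, in_qB G0 x ->
    in_BZ G0 (fun g => (x g *+ 2)%R) -> in_BZ G0 (fun g => (x g *+ 3)%R) ->
    in_BZ G0 x.

Definition dihedral_gens (gT : finGroupType) (n : nat) (a b : gT) : Prop :=
  [/\ (a ^+ n = 1)%g, (b ^+ 2 = 1)%g, (b * a = a^-1 * b)%g &
      #|<<[set a; b]>>%g| = (2 * n)%N].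

From mathcomp Require Import all_boot all_order all_algebra all_fingroup.
From mathcomp Require Import cyclic zify.
Set Implicit Arguments. Unset Strict Implicit. Unset Printing Implicit Defensive.

(* In D_2n = <a, b>, reflecting by b inverts every rotation, so a product of
   the terms of a word in a and b with exactly two b's equals a^p a^-q, where
   p + q is the number of a's.  For S = a^[m] . b^[2] with m = (n-1)/2 we have
   p + q = m < n and m odd (as n = 3 mod 4), so a^p != a^q and 1 \notin pi(S).
   On the other hand a^m b a^m b^3 = 1 and, for n = 4k + 3, a^(5k+3) b a^k b^5
   = a^n = 1, so S^[2] and S^[3] lie in B(D_2n), whence S = S^[3] S^[-2] lies in
   q(B) and B(G) fails to be seminormal for every G containing D_2n. *)

Open Scope group_scope.

Section SeminormalWitness.

Variables (gT : finGroupType) (G0 : {set gT}) (S : fseq gT).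

Lemma in_F_seq_rep k : in_F G0 S -> in_F G0 (seq_rep k S).
Proof. by move=> SG0 g; rewrite ffunE muln_eq0 negb_or => /andP[_ /SG0]. Qed.

Lemma in_BZ_seq_rep k :
  in_B G0 (seq_rep k S) -> in_BZ G0 (fun g => (embZ S g *+ k)%R).
Proof. by move=> Bk; exists (seq_rep k S); split=> // g; rewrite ffunE /embZ; lia. Qed.

Lemma in_qB_seq_rep23 :
  in_B G0 (seq_rep 2 S) -> in_B G0 (seq_rep 3 S) -> in_qB G0 (embZ S).
Proof.
by move=> B2 B3; exists (seq_rep 3 S), (seq_rep 2 S); split=> // g; rewrite !ffunE /embZ; lia.
Qed.

Lemma not_B_seminormal_seq_rep23 :
  ~ in_pi S 1 -> in_B G0 (seq_rep 2 S) -> in_B G0 (seq_rep 3 S) ->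
  ~ B_seminormal G0.
Proof.
move=> S_not_pi B2 B3 seminormal.
have [A [[_ piA] AS]] := seminormal _ (in_qB_seq_rep23 B2 B3)
  (in_BZ_seq_rep B2) (in_BZ_seq_rep B3).
have SA : S = A by apply/ffunP=> g; case: (AS g).
by apply: S_not_pi; rewrite SA.
Qed.

End SeminormalWitness.

Section DihedralWords.

Variables (gT : finGroupType) (a b : gT).
Hypothesis ba : b * a = a^-1 * b.

Lemma dihedral_mul_cycle x : x \in <[a]> -> b * x = x^-1 * b.
Proof.
case/cycleP=> k ->; elim: k => [|k IH]; first by rewrite invg1 mulg1 mul1g.
by rewrite {1}expgSr mulgA IH -mulgA ba expgS invMg !mulgA.
Qed.

Hypothesis a_neq_b : a != b.

Lemma prod_dihedral_word s : all (mem [:: a; b]) s ->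
  exists p q, (p + q = count_mem a s)%N /\
    \prod_(y <- s) y = a ^+ p * a ^- q * b ^+ count_mem b s.
Proof.
elim: s => [|x s IH] /=.
  by move=> _; exists 0%N, 0%N; rewrite big_nil invg1 !mulg1.
rewrite big_cons !inE => /andP[/orP[] /eqP -> /IH[p [q [pq ->]]]].
  exists p.+1, q; rewrite eqxx (negbTE a_neq_b) /= expgS !mulgA.
  by rewrite -pq addSn.
exists q, p; rewrite eqxx eq_sym (negbTE a_neq_b) /= expgS mulgA.
rewrite dihedral_mul_cycle ?groupM ?groupV ?mem_cycle // invMg invgK !mulgA.
by rewrite addnC -pq.
Qed.

Hypothesis b2 : b ^+ 2 = 1.

Lemma prod_dihedral_word_neq1 s : all (mem [:: a; b]) s ->
  count_mem b s = 2%N -> odd (count_mem a s) -> (count_mem a s < #[a])%N ->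
  \prod_(y <- s) y != 1.
Proof.
move=> s_ab s_b s_a_odd s_a_lt.
have [p [q [pq ->]]] := prod_dihedral_word s_ab.
rewrite s_b b2 mulg1 -eq_mulgV1 eq_expg_mod_order !modn_small; first (apply/eqP; lia).
- lia.
- lia.
Qed.

End DihedralWords.

Lemma order_dihedral_gen (gT : finGroupType) n (a b : gT) :
  (0 < n)%N -> dihedral_gens n a b -> #[a] = n.
Proof.
move=> n_gt0 [an b2 ba cardD].
have binv : b^-1 = b by apply/eqP; rewrite eq_invg_mul -expg2 b2.
have nab : <[b]> \subset 'N(<[a]>).
  by rewrite norms_cycle /conjg binv mulgA ba -mulgA -expg2 b2 mulg1 groupV cycle_id.
have D_sub : <<[set a; b]>> \subset <[a]> * <[b]>.
  rewrite -norm_joinEr // gen_subG; apply/subsetP=> x; rewrite !inE.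
  by case/orP=> /eqP ->; rewrite mem_gen // inE cycle_id ?orbT.
have card_ab : (#|(<[a]> * <[b]>)%g| <= #[a] * 2)%N.
  rewrite cardMg_divn (leq_trans (leq_div _ _)) // leq_mul //.
  by rewrite dvdn_leq // order_dvdn b2.
have := subset_leq_card D_sub; rewrite cardD.
have : (#[a] %| n)%N by rewrite order_dvdn an.
move=> /(dvdn_leq n_gt0); lia.
Qed.

Lemma dihedral_gen_neq (gT : finGroupType) n (a b : gT) :
  (3 <= n)%N -> dihedral_gens n a b -> a != b.
Proof.
move=> n_ge3 dg; have order_a := order_dihedral_gen (ltnW (ltnW n_ge3)) dg.
case: dg => _ b2 _ _; apply/eqP=> ab; have := order_dvdn a 2; rewrite ab b2 eqxx.
by rewrite -ab order_a => /dvdn_leq; lia.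
Qed.

Definition dihedral_seq (gT : finGroupType) n (a b : gT) : fseq gT :=
  seq_mul (seq_pow1 a ((n - 1) %/ 2)) (seq_pow1 b 2).

Lemma in_F_dihedral_seq (gT : finGroupType) (G0 : {set gT}) n (a b : gT) :
  a \in G0 -> b \in G0 -> in_F G0 (dihedral_seq n a b).
Proof.
move=> aG0 bG0 g; rewrite !ffunE.
by case: (g =P a) => [-> //|_]; case: (g =P b) => [-> //|_]; rewrite !mul0n.
Qed.

Section DihedralSeq.

Variables (gT : finGroupType) (n : nat) (a b : gT).
Hypotheses (dg : dihedral_gens n a b) (a_neq_b : a != b).

Let S := dihedral_seq n a b.
Let m := ((n - 1) %/ 2)%N.

Lemma dihedral_seqE g : S g = ((g == a) * m + (g == b) * 2)%N.
Proof. by rewrite !ffunE. Qed.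

Lemma in_pi_seq_rep_word k s : all (mem [:: a; b]) s ->
  count_mem a s = (k * m)%N -> count_mem b s = (k * 2)%N ->
  \prod_(y <- s) y = 1 -> in_pi (seq_rep k S) 1.
Proof.
move=> s_ab s_a s_b prod1; exists s; split=> // g; rewrite ffunE dihedral_seqE.
case: (eqVneq g a) => [-> | ga]; first by rewrite (negbTE a_neq_b) s_a; lia.
case: (eqVneq g b) => [-> | gb]; first by rewrite s_b; lia.
rewrite muln0; apply/count_memPn/negP=> /(allP s_ab).
by rewrite !inE (negbTE ga) (negbTE gb).
Qed.

Lemma dihedral_seq2_pi : in_pi (seq_rep 2 S) 1.
Proof.
case: dg => _ b2 ba _.
apply: (@in_pi_seq_rep_word _ (nseq m a ++ b :: nseq m a ++ [:: b; b; b])).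
- by rewrite all_cat /= all_cat /= !all_nseq !inE !eqxx !orbT.
- by rewrite !count_cat /= !count_cat /= !count_nseq /= eqxx eq_sym (negbTE a_neq_b); lia.
- by rewrite !count_cat /= !count_cat /= !count_nseq /= eqxx (negbTE a_neq_b); lia.
rewrite big_cat big_cons big_cat !big_cons big_nil !big_nseq /= !iter_mulg_1 mulg1.
rewrite [b * (a ^+ m * _)]mulgA (dihedral_mul_cycle ba (mem_cycle a m)) -mulgA mulKVg.
by rewrite -[LHS]/(b ^+ (2 * 2)) expgM b2 expg1n.
Qed.

(* With n = 4k + 3, the word a^(n+k) b a^k b^5 has 3m = 6k + 3 letters a. *)
Lemma dihedral_seq3_pi : n %% 4 = 3 -> in_pi (seq_rep 3 S) 1.
Proof.
case: dg => an b2 ba _ n_mod4; set k := (n %/ 4)%N.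
apply: (@in_pi_seq_rep_word _ (nseq (n + k) a ++ b :: nseq k a ++ nseq 5 b)).
- by rewrite all_cat /= all_cat !all_nseq /= !inE !eqxx !orbT.
- rewrite !count_cat /= !count_cat !count_nseq /= eqxx eq_sym (negbTE a_neq_b) /m /k; lia.
- by rewrite !count_cat /= !count_cat !count_nseq /= eqxx (negbTE a_neq_b); lia.
rewrite big_cat big_cons big_cat !big_nseq /= !iter_mulg_1.
rewrite [b * (a ^+ k * _)]mulgA (dihedral_mul_cycle ba (mem_cycle a k)) -mulgA.
rewrite expgD an mul1g mulKVg mulg1.
by rewrite -[LHS]/(b ^+ (2 * 3)) expgM b2 expg1n.
Qed.

Lemma dihedral_seq_not_pi : (3 <= n)%N -> n %% 4 = 3 -> ~ in_pi S 1.
Proof.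
move=> n_ge3 n_mod4 [s [countS prod1]]; case: (dg) => _ b2 ba _.
have order_a : #[a] = n by apply: order_dihedral_gen dg; lia.
have s_ab : all (mem [:: a; b]) s.
  apply/allP=> x xs; rewrite !inE; apply/negPn/negP=> /norP[/negbTE xa /negbTE xb].
  by have := countS x; rewrite dihedral_seqE xa xb => /count_memPn; rewrite xs.
have s_a : count_mem a s = m by rewrite countS dihedral_seqE eqxx (negbTE a_neq_b); lia.
have s_b : count_mem b s = 2%N.
  by rewrite countS dihedral_seqE eqxx eq_sym (negbTE a_neq_b); lia.
have m_odd : odd m by rewrite /m; lia.
have m_lt_n : (m < n)%N by rewrite /m; lia.
have := prod_dihedral_word_neq1 ba a_neq_b b2 s_ab s_b.
by rewrite s_a order_a prod1 eqxx => /(_ m_odd m_lt_n).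
Qed.

End DihedralSeq.

Lemma in_B_dihedral_seq_rep (gT : finGroupType) (G0 : {set gT}) n (a b : gT) k :
  a \in G0 -> b \in G0 -> in_pi (seq_rep k (dihedral_seq n a b)) 1 ->
  in_B G0 (seq_rep k (dihedral_seq n a b)).
Proof. by move=> aG0 bG0; split; first exact/in_F_seq_rep/in_F_dihedral_seq. Qed.

Theorem mainTheorem9 (n : nat) (hn3 : (3 <= n)%N) (hn4 : n %% 4 = 3) :
  (forall (gT : finGroupType) (a b : gT), dihedral_gens n a b ->
     let D := <<[set a; b]>>%g in
     let S := seq_mul (seq_pow1 a ((n - 1) %/ 2)) (seq_pow1 b 2) in
     [/\ in_qB D (embZ S), ~ in_B D S, in_B D (seq_rep 2 S) &
         in_B D (seq_rep 3 S)])
  /\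
  (forall (gT : finGroupType) (G : {group gT}),
     (exists (H : {group gT}) (a b : gT),
        [/\ H \subset G, H = <<[set a; b]>>%G :> {set gT} & dihedral_gens n a b]) ->
     ~ B_seminormal G).
Proof.
split=> [gT a b dg D S | gT G [H [a [b [sHG defH dg]]]]];
  have a_neq_b := dihedral_gen_neq hn3 dg.
  have aD : a \in D by rewrite mem_gen ?set21.
  have bD : b \in D by rewrite mem_gen ?set22.
  have B2 := in_B_dihedral_seq_rep aD bD (dihedral_seq2_pi dg a_neq_b).
  have B3 := in_B_dihedral_seq_rep aD bD (dihedral_seq3_pi dg a_neq_b hn4).
  split=> //; first exact: in_qB_seq_rep23.
  by case=> _; apply: dihedral_seq_not_pi.
have aG : a \in G by rewrite (subsetP sHG) // defH mem_gen ?set21.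
have bG : b \in G by rewrite (subsetP sHG) // defH mem_gen ?set22.
apply: (not_B_seminormal_seq_rep23 (dihedral_seq_not_pi dg a_neq_b hn3 hn4)).
- exact: in_B_dihedral_seq_rep aG bG (dihedral_seq2_pi dg a_neq_b).
- exact: in_B_dihedral_seq_rep aG bG (dihedral_seq3_pi dg a_neq_b hn4).
Qed.
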